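(* Let $G\le\mathrm{Aff}(n)$ be a subgroup acting transitively on $\mathbb{R}^n$. Then the centraliser of $G$ in $\mathrm{Aff}(n)$ is a connected unipotent group of dimension at most $n$.
   Context: $\mathrm{Aff}(n)$ is the affine group of $\mathbb{R}^n$, identified with matrices $\begin{pmatrix} g&t\\0&1\end{pmatrix}\in GL(n+1,\mathbb{R})$; a subgroup is unipotent if all its elements are unipotent matrices. *)

From HB Require Import structures.
From Stdlib Require Import Reals Lra.
From Stdlib Require Import ClassicalEpsilon FunctionalExtensionality.
From mathcomp Require Import all_boot all_order all_algebra.

Set Implicit Arguments.
Unset Strict Implicit.
Unset Printing Implicit Defensive.

Definition Req_bool (x y : R) : bool := if Req_EM_T x y then true else false.

Lemma Req_boolP : Equality.axiom Req_bool.
Proof. move=> x y; rewrite /Req_bool; destruct (Req_EM_T x y) as [h|h]; by constructor. Qed.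

HB.instance Definition _ := hasDecEq.Build R Req_boolP.

Definition R_find (P : pred R) (_ : nat) : option R :=
  match excluded_middle_informative (exists x, P x) with
  | left h => Some (proj1_sig (constructive_indefinite_description _ h))
  | right _ => None
  end.

Lemma R_find_correct P n x : R_find P n = Some x -> P x.
Proof.
rewrite /R_find; case: excluded_middle_informative => // h [<-].
exact: proj2_sig (constructive_indefinite_description _ h).
Qed.

Lemma R_find_complete (P : pred R) : (exists x, P x) -> exists n, R_find P n.
Proof.
move=> h; exists 0%N; rewrite /R_find; case: excluded_middle_informative => //.
Qed.

Lemma R_find_ext (P Q : pred R) : P =1 Q -> R_find P =1 R_find Q.
Proof.
move=> e; have -> : P = Q by apply: functional_extensionality.
by [].
Qed.

HB.instance Definition _ := hasChoice.Build R R_find_correct R_find_complete R_find_ext.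

Lemma R_addrA : forall x y z : R, Rplus x (Rplus y z) = Rplus (Rplus x y) z. Proof. move=> x y z; lra. Qed.
Lemma R_addrC : forall x y : R, Rplus x y = Rplus y x. Proof. move=> x y; lra. Qed.
Lemma R_add0r : forall x : R, Rplus R0 x = x. Proof. move=> x; lra. Qed.
Lemma R_addNr : forall x : R, Rplus (Ropp x) x = R0. Proof. move=> x; lra. Qed.

HB.instance Definition _ := GRing.isZmodule.Build R R_addrA R_addrC R_add0r R_addNr.

Lemma R_mulrA : forall x y z : R, Rmult x (Rmult y z) = Rmult (Rmult x y) z. Proof. move=> x y z; ring. Qed.
Lemma R_mulrC : forall x y : R, Rmult x y = Rmult y x. Proof. move=> x y; ring. Qed.
Lemma R_mul1r : forall x : R, Rmult R1 x = x. Proof. move=> x; ring. Qed.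
Lemma R_mulrDl : forall x y z : R, Rmult (Rplus x y) z = Rplus (Rmult x z) (Rmult y z). Proof. move=> x y z; ring. Qed.
Lemma R_one_neq0 : R1 != (R0 : R).
Proof. apply/eqP; exact: R1_neq_R0. Qed.

HB.instance Definition _ :=
  GRing.Zmodule_isComNzRing.Build R R_mulrA R_mulrC R_mul1r R_mulrDl R_one_neq0.

Definition R_inv (x : R) : R := if Req_EM_T x R0 then R0 else Rinv x.

Lemma R_mulVf (x : R) : x != R0 -> Rmult (R_inv x) x = R1.
Proof.
move=> h; rewrite /R_inv; destruct (Req_EM_T x R0) as [e|ne].
  by exfalso; subst x; move: h; rewrite eqxx.
by apply: Rinv_l; apply/eqP.
Qed.

Lemma R_inv0 : R_inv R0 = R0.
Proof. by rewrite /R_inv; destruct (Req_EM_T R0 R0). Qed.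

HB.instance Definition _ := GRing.ComNzRing_isField.Build R R_mulVf R_inv0.

Local Open Scope ring_scope.

Definition Aff (n : nat) (M : 'M[R]_(n + 1)) : Prop :=
  exists (g : 'M[R]_n) (t : 'cV[R]_n),
    g \in unitmx /\ M = block_mx g t (0 : 'M[R]_(1, n)) (1%:M : 'M[R]_1).

(* The action of an element of Aff(n) on R^n: x |-> g x + t,
   i.e. the homogeneous vector (x;1) is sent to M (x;1). *)
Definition hom (n : nat) (x : 'cV[R]_n) : 'cV[R]_(n + 1) :=
  col_mx x (1%:M : 'M[R]_1).

Definition is_subgroup_Aff (n : nat) (G : 'M[R]_(n + 1) -> Prop) : Prop :=
  (forall M, G M -> Aff M) /\
  G 1%:M /\
  (forall A B, G A -> G B -> G (A *m B)) /\
  (forall A, G A -> G (invmx A)).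

Definition transitive_on_Rn (n : nat) (G : 'M[R]_(n + 1) -> Prop) : Prop :=
  forall x y : 'cV[R]_n, exists A, G A /\ A *m hom x = hom y.

Definition centraliser_Aff (n : nat) (G : 'M[R]_(n + 1) -> Prop)
  (M : 'M[R]_(n + 1)) : Prop :=
  Aff M /\ forall A, G A -> A *m M = M *m A.

Fixpoint mxpow (m : nat) (A : 'M[R]_m) (k : nat) : 'M[R]_m :=
  match k with
  | O => 1%:M
  | S k' => A *m mxpow A k'
  end.

Definition unipotent_mx (m : nat) (M : 'M[R]_m) : Prop :=
  exists k, mxpow (M - 1%:M) k = 0.

Definition mx_open (m : nat) (U : 'M[R]_m -> Prop) : Prop :=
  forall M, U M -> exists eps : R, Rlt R0 eps /\
    forall N : 'M[R]_m, (forall i j, Rlt (Rabs (Rminus (N i j) (M i j))) eps) -> U N.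

Definition mx_connected (m : nat) (S : 'M[R]_m -> Prop) : Prop :=
  ~ exists U V : 'M[R]_m -> Prop,
      mx_open U /\ mx_open V /\
      (forall M, S M -> U M \/ V M) /\
      (forall M, S M -> U M -> V M -> False) /\
      (exists M, S M /\ U M) /\ (exists M, S M /\ V M).

Definition mx_exp_is (m : nat) (X E : 'M[R]_m) : Prop :=
  forall i j, Un_cv (fun N => sum_f_R0 (fun k => Rdiv (mxpow X k i j) (INR (factorial k))) N)
                    (E i j).

Definition lie_algebra (m : nat) (H : 'M[R]_m -> Prop) (X : 'M[R]_m) : Prop :=
  forall (t : R) (E : 'M[R]_m), mx_exp_is (t *: X) E -> H E.

(* dim H <= d: every linearly independent family in Lie(H) has at most d elements.
   (The dimension of a Lie group is the real dimension of its Lie algebra.) *)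
Definition lie_dim_le (m : nat) (H : 'M[R]_m -> Prop) (d : nat) : Prop :=
  forall (k : nat) (X : 'I_k -> 'M[R]_m),
    (forall i, lie_algebra H (X i)) ->
    (forall c : 'I_k -> R, \sum_(i < k) c i *: X i = 0 -> forall i, c i = 0) ->
    (k <= d)%N.

From Pilot Require Import Defs.
From HB Require Import structures.
From Stdlib Require Import Reals Lra Lia Psatz Classical.
From mathcomp Require Import all_boot all_order all_algebra.
Set Implicit Arguments. Unset Strict Implicit. Unset Printing Implicit Defensive.
Import GRing.Theory.
Local Open Scope ring_scope.

(* Everything rests on a rigidity fact ([commutant_point_kernel]): a matrix
   commuting with G and vanishing at one point (x0;1) vanishes everywhere,
   because every point (y;1) is the image of (x0;1) under some element of G.
   1. Unipotence.  For M in C the matrix N = M - 1 has zero last row.  Once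
      the images of the powers N^j stabilise, (0;1) splits as a kernel vector
      of N^j plus a vector of im N; the kernel part is again a point (x0;1),
      so N^j = 0 by rigidity.
   2. Connectedness.  Since N is nilpotent, every 1 + s N is invertible and
      still lies in C, so C is star-shaped about 1; star-shaped sets of
      matrices are connected because the unit interval is.
   3. Dimension.  From exp(tX) = 1 + tX + O(t^2), every X in Lie(C) has zero
      last row and commutes with G.  By rigidity X is determined by the first
      n coordinates of X (0;1), so Lie(C) embeds linearly into R^n. *)

(* The field operations of [R] are Stdlib's; these equations expose them to [lra] and [ring]. *)
Lemma addE (x y : R) : x + y = Rplus x y. Proof. by []. Qed.

Lemma mulE (x y : R) : x * y = Rmult x y. Proof. by []. Qed.

Lemma powE (t : R) k : t ^+ k = pow t k.
Proof. by elim: k => [|k IH] //; rewrite exprS IH. Qed.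

Lemma natmulE (c : R) k : c *+ k = Rmult (INR k) c.
Proof.
elim: k => [|k IH]; first by rewrite mulr0n /= Rmult_0_l.
by rewrite mulrS IH S_INR addE Rmult_plus_distr_r Rmult_1_l Rplus_comm.
Qed.

Lemma factE k : k`! = Factorial.fact k.
Proof. by elim: k => // k IH; rewrite factS IH. Qed.

Lemma Rabs_sum_le (I : finType) (F G : I -> R) :
  (forall i, Rle (Rabs (F i)) (G i)) -> Rle (Rabs (\sum_i F i)) (\sum_i G i).
Proof.
move=> FG; apply: (big_ind2 (fun a b => Rle (Rabs a) b)) => //.
  by rewrite Rabs_R0; apply: Rle_refl.
by move=> a b c d ab cd; apply: Rle_trans (Rabs_triang a c) _; apply: Rplus_le_compat.
Qed.

Lemma finite_bound (T : finType) (f : T -> R) : exists b, Rle 0 b /\ forall t, Rle (f t) b.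
Proof.
suff [b [b0 Hb]] : exists b, Rle 0 b /\ forall t, t \in enum T -> Rle (f t) b.
  by exists b; split => // t; apply: Hb; rewrite mem_enum.
elim: (enum T) => [|x l [b [b0 Hb]]]; first by exists R0; split => //; apply: Rle_refl.
exists (Rmax (f x) b); split; first exact: Rle_trans (Rmax_r _ _).
move=> t; rewrite in_cons => /orP [/eqP -> | Ht]; first exact: Rmax_l.
exact: Rle_trans (Hb t Ht) (Rmax_r _ _).
Qed.

Section UnitInterval.
Local Open Scope R_scope.

Definition nbhd_of (P : R -> Prop) (s : R) : Prop :=
  exists d, 0 < d /\ forall r, Rabs (r - s) < d -> P r.

(* Proof: look at the
   supremum of the initial segments contained in the first set. *)
Lemma unit_interval_connected (P Q : R -> Prop) :
  (forall s, 0 <= s <= 1 -> P s \/ Q s) ->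
  (forall s, 0 <= s <= 1 -> P s -> Q s -> False) ->
  (forall s, P s -> nbhd_of P s) -> (forall s, Q s -> nbhd_of Q s) ->
  P 0 -> Q 1 -> False.
Proof.
move=> cover disj openP openQ P0 Q1.
pose E s := 0 <= s <= 1 /\ forall r, 0 <= r <= s -> P r.
have [s [ub lub]] : {s | is_lub E s}.
  apply: completeness; first by exists 1 => x [[]].
  exists 0; split; first lra.
  by move=> r r0; have -> : r = 0 by lra.
have s01 : 0 <= s <= 1.
  split; last by apply: lub => x [[]].
  apply: ub; split; first lra.
  by move=> r r0; have -> : r = 0 by lra.
have below x : x < s -> exists e, E e /\ x < e.
  move=> xs; apply: NNPP => none; suff : s <= x by lra.
  by apply: lub => e Ee; apply: Rnot_lt_le => xe; apply: none; exists e.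
case: (cover s s01) => [Ps | Qs].
- have [d [d0 Hd]] := openP s Ps.
  pose s' := Rmin (s + d / 2) 1.
  have Es' : E s'.
    split; first by split; [apply: Rmin_glb; lra | apply: Rmin_r].
    move=> r [r0 rs']; case: (Rlt_le_dec r s) => rs.
      by have [e [[_ He] re]] := below r rs; apply: He; lra.
    have := Rmin_l (s + d / 2) 1; rewrite -/s' => ?.
    by apply: Hd; rewrite Rabs_right; lra.
  have s's : s' <= s := ub _ Es'.
  have s'1 : s' = 1.
    move: s's; rewrite /s' /Rmin; case: Rle_dec => //; lra.
  by apply: (disj 1); [lra | apply: (proj2 Es'); lra | ].
- have [d [d0 Hd]] := openQ s Qs.
  have [e [[e01 He] se]] := below (s - d) ltac:(lra).
  have es : e <= s := ub _ (conj e01 He).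
  by apply: (disj e e01); [apply: He; lra | apply: Hd; rewrite Rabs_left1; lra].
Qed.

End UnitInterval.

Lemma segment_nbhd m (O D : 'M[R]_m) (W : 'M[R]_m -> Prop) (s : R) :
  mx_open W -> W (O + s *: D) -> nbhd_of (fun r => W (O + r *: D)) s.
Proof.
move=> openW Ws; have [e [e0 He]] := openW _ Ws.
have [b [b0 Hb]] := finite_bound (fun p : 'I_m * 'I_m => Rabs (D p.1 p.2)).
have b1 : Rlt 0 (Rplus b 1) by lra.
exists (Rdiv e (Rplus b 1)); split; first exact: Rdiv_lt_0_compat.
move=> r Hr; pose g (t : R) := O + t *: D; apply: (He (g r)) => i j.
have -> : Rminus (g r i j) (g s i j) = Rmult (Rminus r s) (D i j).
  rewrite /g !mxE.
  change (Rminus (Rplus (O i j) (Rmult r (D i j))) (Rplus (O i j) (Rmult s (D i j)))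
          = Rmult (Rminus r s) (D i j)); ring.
have close : Rlt (Rmult (Rabs (Rminus r s)) (Rplus b 1)) e.
  have := Rmult_lt_compat_r _ _ _ b1 Hr.
  by rewrite /Rdiv Rmult_assoc Rinv_l ?Rmult_1_r //; apply: Rgt_not_eq.
have Dij : Rle (Rabs (D i j)) b := Hb (i, j).
have := Rabs_pos (Rminus r s); rewrite Rabs_mult; nra.
Qed.

Lemma star_shaped_connected m (S : 'M[R]_m -> Prop) (O : 'M[R]_m) :
  S O -> (forall M, S M -> forall s, Rle 0 s -> Rle s 1 -> S (O + s *: (M - O))) ->
  mx_connected S.
Proof.
move=> SO star [U [V [openU [openV [cover [disj [[MU [SMU UMU]] [MV [SMV VMV]]]]]]]]].
suff separated (U' V' : 'M[R]_m -> Prop) M : mx_open U' -> mx_open V' ->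
    (forall X, S X -> U' X \/ V' X) -> (forall X, S X -> U' X -> V' X -> False) ->
    U' O -> S M -> V' M -> False.
  case: (cover O SO) => [UO | VO]; first exact: (separated U V MV).
  apply: (separated V U MU) => // X SX; first by case: (cover X SX); auto.
  by move=> VX UX; apply: (disj X).
move=> openU' openV' cover' disj' U'O SM V'M.
pose g (r : R) := O + r *: (M - O).
have g0 : g R0 = O by rewrite /g scale0r addr0.
have g1 : g R1 = M by rewrite /g scale1r addrC subrK.
apply: (unit_interval_connected (P := fun r => U' (g r)) (Q := fun r => V' (g r))).
- by move=> r [r0 r1]; apply: cover'; apply: star.
- by move=> r [r0 r1]; apply: disj'; apply: star.
- by move=> r; apply: segment_nbhd.
- by move=> r; apply: segment_nbhd.
- by rewrite g0.
- by rewrite g1.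
Qed.

Lemma mxpowE m (A : 'M[R]_m) k : mxpow A k = A ^+ k.
Proof. by elim: k => [|k IH] //=; rewrite IH exprS. Qed.

Lemma exprZ_mx m (a : R) (N : 'M[R]_m) k : (a *: N) ^+ k = a ^+ k *: N ^+ k.
Proof.
elim: k => [|k IH]; first by rewrite !expr0 scale1r.
by rewrite !exprS IH -mulmxE -scalemxAl -scalemxAr scalerA.
Qed.

Definition commutant m (G : 'M[R]_m -> Prop) (B : 'M[R]_m) : Prop :=
  forall A, G A -> A *m B = B *m A.

Lemma commutant_sub1 m (G : 'M[R]_m -> Prop) M :
  commutant G M -> commutant G (M - 1%:M).
Proof. by move=> cM A GA; rewrite mulmxBr mulmxBl cM // mulmx1 mul1mx. Qed.

Lemma commutantX m (G : 'M[R]_m -> Prop) B k :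
  commutant G B -> commutant G (B ^+ k).
Proof. by move=> cB A GA; apply: commrX; apply: cB. Qed.

(* The points (y;1) of the affine chart span R^(n+1): a matrix vanishing
   on all of them is zero. *)
Lemma hom_span n (B : 'M[R]_(n + 1)) : (forall y, B *m Defs.hom y = 0) -> B = 0.
Proof.
move=> Bhom; apply/matrixP => i k.
pose z : 'cV[R]_(n + 1) := delta_mx k 0.
have z_hom : z = Defs.hom (usubmx z) - Defs.hom 0 + dsubmx z 0 0 *: Defs.hom 0.
  rewrite /Defs.hom scale_col_mx opp_col_mx !add_col_mx scaler0 subr0 addr0 subrr add0r.
  by rewrite scalemx1 -mx11_scalar vsubmxK.
have Bz : B *m z = 0 by rewrite z_hom !mulmxDr mulmxN -scalemxAr !Bhom subrr scaler0 addr0.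
by have := congr1 (fun Z : 'cV[R]_(n + 1) => Z i 0) Bz; rewrite -colE !mxE.
Qed.

Lemma commutant_point_kernel n (G : 'M[R]_(n + 1) -> Prop) B x0 :
  transitive_on_Rn G -> commutant G B -> B *m Defs.hom x0 = 0 -> B = 0.
Proof.
move=> transG cB Bx0; apply: hom_span => y.
have [A [GA Ax0]] := transG x0 y.
by rewrite -Ax0 mulmxA -cB // -mulmxA Bx0 mulmx0.
Qed.

Lemma Aff_last_row n (M : 'M[R]_(n + 1)) : Aff M -> dsubmx (M - 1%:M) = 0.
Proof.
case=> g [t [_ ->]]; rewrite (scalar_mx_block n 1 1) opp_block_mx add_block_mx.
by rewrite block_mxEv col_mxKd !subrr row_mx0.
Qed.

Lemma dsubmx_mul m1 m2 n p (A : 'M[R]_(m1 + m2, n)) (B : 'M[R]_(n, p)) :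
  dsubmx (A *m B) = dsubmx A *m B.
Proof. by rewrite -{1}[A]vsubmxK mul_col_mx col_mxKd. Qed.

Lemma chart_sub_image n (N : 'M[R]_(n + 1)) x w :
  dsubmx N = 0 -> exists y, Defs.hom x - N *m w = Defs.hom y.
Proof.
move=> N0; exists (usubmx (Defs.hom x - N *m w)).
rewrite /Defs.hom -[LHS]vsubmxK; congr col_mx.
by rewrite linearB /= dsubmx_mul N0 mul0mx subr0 col_mxKd.
Qed.

(* Fitting: the (row spaces of the transposes, i.e. the) images of the
   powers N^j decrease, hence stabilise since their rank cannot drop forever. *)
Lemma power_image_stable m (N : 'M[R]_m) : exists j, ((N ^+ j)^T <= (N ^+ j.+1)^T)%MS.
Proof.
apply: NNPP => unstable.
have decr j : ((N ^+ j.+1)^T <= (N ^+ j)^T)%MS by rewrite exprSr trmx_mul submxMl.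
have rank_lt j : (\rank (N ^+ j.+1)^T < \rank (N ^+ j)^T)%N.
  rewrite (ltn_leqif (mxrank_leqif_sup (decr j))).
  by apply/negP => sub; apply: unstable; exists j.
have rank_bound j : (\rank (N ^+ j)^T + j <= m)%N.
  elim: j => [|j IH]; first by rewrite addn0 rank_leq_col.
  by rewrite addnS; apply: leq_trans IH; rewrite ltn_add2r.
by have := rank_bound m.+1; rewrite addnS ltnNge leq_addl.
Qed.

Lemma centraliser_nilpotent n (G : 'M[R]_(n + 1) -> Prop) M :
  transitive_on_Rn G -> centraliser_Aff G M -> exists j, (M - 1%:M) ^+ j = 0.
Proof.
move=> transG [AffM cM]; set N := M - 1%:M.
have [j stable] := power_image_stable N; exists j.
set e := Defs.hom (0 : 'cV[R]_n).
have /submxP [D eD] : (e^T *m (N ^+ j)^T <= (N ^+ j.+1)^T)%MS.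
  exact: submx_trans (submxMl _ _) stable.
have NjeD : N ^+ j *m e = N ^+ j.+1 *m D^T.
  by apply: trmx_inj; rewrite [LHS]trmx_mul [RHS]trmx_mul trmxK eD.
set v := e - N *m D^T.
have Njv : N ^+ j *m v = 0 by rewrite mulmxBr NjeD exprSr -mulmxE mulmxA subrr.
have [x0 v_hom] := chart_sub_image 0 D^T (Aff_last_row AffM).
apply: (commutant_point_kernel (x0 := x0) transG); first exact/commutantX/commutant_sub1.
by rewrite -v_hom.
Qed.

(* 1 + N is invertible when N is nilpotent (the inverse is a finite geometric
   series, given by [subrX1]). *)
Lemma nilpotent_unit m (N : 'M[R]_m) j : N ^+ j = 0 -> (1%:M + N) \in unitmx.
Proof.
move=> Nj0; have := subrX1 (- N) j.
rewrite exprNn Nj0 mulr0 sub0r -opprD mulNr addrC => /oppr_inj geom.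
by have [] := @mulmx1_unit _ _ (1%:M + N) _ (esym geom).
Qed.

Lemma Aff_of_unit n (P : 'M[R]_(n + 1)) :
  P \in unitmx -> dsubmx (P - 1%:M) = 0 -> Aff P.
Proof.
move=> Punit P0; have lastP : dsubmx P = row_mx 0 1%:M.
  move/eqP: P0; rewrite linearB /= subr_eq0 => /eqP ->.
  by rewrite (scalar_mx_block n 1 1) block_mxEv col_mxKd.
have defP : P = block_mx (ulsubmx P) (ursubmx P) 0 1%:M.
  by rewrite -{1}[P]submxK /dlsubmx /drsubmx lastP row_mxKl row_mxKr.
exists (ulsubmx P), (ursubmx P); split => //.
by move: Punit; rewrite !unitmxE defP det_ublock det1 mulr1 block_mxKul.
Qed.

Lemma centraliser_segment n (G : 'M[R]_(n + 1) -> Prop) M s :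
  transitive_on_Rn G -> centraliser_Aff G M ->
  centraliser_Aff G (1%:M + s *: (M - 1%:M)).
Proof.
move=> transG CM; have [j Nj0] := centraliser_nilpotent transG CM.
case: CM => AffM cM; split.
  apply: Aff_of_unit.
    apply: (@nilpotent_unit _ _ j).
    by rewrite exprZ_mx Nj0 scaler0.
  by rewrite addrC addKr linearZ /= Aff_last_row // scaler0.
move=> A GA; rewrite mulmxDr mulmxDl mulmx1 mul1mx -scalemxAr -scalemxAl.
by rewrite (commutant_sub1 cM).
Qed.

Section RealSeries.
Local Open Scope R_scope.

Lemma first_order_zero (x K : R) :
  (forall t, 0 < t <= 1 -> Rabs (t * x) <= K * t ^ 2) -> x = 0.
Proof.
move=> small; apply: NNPP => x0.
have ax : 0 < Rabs x by apply: Rabs_pos_lt.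
have K1 : 0 < Rabs K + 1 by have := Rabs_pos K; lra.
pose t := Rmin 1 (Rabs x / (2 * (Rabs K + 1))).
have t0 : 0 < t by apply: Rmin_glb_lt; [lra | apply: Rdiv_lt_0_compat; lra].
have t1 : t <= 1 := Rmin_l _ _.
have t_small : (Rabs K + 1) * t <= Rabs x / 2.
  have -> : Rabs x / 2 = (Rabs K + 1) * (Rabs x / (2 * (Rabs K + 1))) by field; lra.
  by apply: Rmult_le_compat_l; [lra | apply: Rmin_r].
have := small t (conj t0 t1); rewrite Rabs_mult (Rabs_right t); last lra.
move=> bound; have xK : Rabs x <= K * t by apply: (Rmult_le_reg_l t) => //; nra.
have := Rle_abs K; nra.
Qed.

Lemma lim_le (u : nat -> R) l c D : Un_cv u l ->
  (forall N, (1 <= N)%coq_nat -> Rabs (u N - c) <= D) -> Rabs (l - c) <= D.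
Proof.
move=> ul uD; apply: Rnot_lt_le => Dlt.
have [N0 HN0] := ul (Rabs (l - c) - D) ltac:(lra).
set N := Nat.max N0 1.
have := HN0 N (Nat.le_max_l _ _); rewrite /Rdist Rabs_minus_sym => close.
have := uD N (Nat.le_max_r _ _).
have := Rabs_triang (l - u N) (u N - c).
have -> : l - u N + (u N - c) = l - c by ring.
lra.
Qed.

Lemma exp_cv x :
  Un_cv (fun N => sum_f_R0 (fun k => / INR (Factorial.fact k) * x ^ k) N) (exp x).
Proof. by rewrite /exp; case: (exist_exp x). Qed.

Lemma exp_dominated_cv (a : nat -> R) x :
  (forall k, Rabs (a k) <= / INR (Factorial.fact k) * x ^ k) ->
  {l | Un_cv (fun N => sum_f_R0 a N) l}.
Proof.
move=> dom; apply: cv_cauchy_2; apply: cauchy_abs; apply: cv_cauchy_1.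
apply: (Rseries_CV_comp _ (fun k => / INR (Factorial.fact k) * x ^ k)).
  by move=> k; split; [exact: Rabs_pos | exact: dom].
by exists (exp x); apply: exp_cv.
Qed.

Lemma pow_unit_interval t k : 0 <= t <= 1 -> 0 <= t ^ k <= 1.
Proof. by move=> t01; elim: k => [|k IH] /=; nra. Qed.

Lemma pow_le_sq t k : 0 <= t <= 1 -> (2 <= k)%coq_nat -> t ^ k <= t ^ 2.
Proof.
move=> t01; case: k => [|[|k]] k2; try lia.
have := pow_unit_interval k t01; rewrite /=; nra.
Qed.

Lemma sum_drop_first_two (a : nat -> R) N : (1 <= N)%coq_nat ->
  sum_f_R0 a N - (a 0%nat + a 1%nat) =
  sum_f_R0 (fun k => match k with 0%nat | 1%nat => 0 | _ => a k end) N.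
Proof.
elim: N => [|[|N] IH] N1; [lia | rewrite /=; ring |].
have sumS (f : nat -> R) : sum_f_R0 f N.+2 = sum_f_R0 f N.+1 + f N.+2 by [].
rewrite !sumS -IH; [ring | lia].
Qed.

Lemma exp_tail_bound (a : nat -> R) t B : 0 < t <= 1 -> 0 <= B ->
  (forall k, Rabs (a k) <= t ^ k * (/ INR (Factorial.fact k) * B ^ k)) ->
  forall N, (1 <= N)%coq_nat -> Rabs (sum_f_R0 a N - (a 0%nat + a 1%nat)) <= exp B * t ^ 2.
Proof.
move=> t01 B0 dom N N1; rewrite sum_drop_first_two //.
apply: Rle_trans (sum_f_R0_triangle _ _) _.
have coef0 k : 0 <= / INR (Factorial.fact k) * B ^ k.
  apply: Rmult_le_pos; last exact: pow_le.
  by apply: Rlt_le; apply: Rinv_0_lt_compat; apply: INR_fact_lt_0.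
apply: Rle_trans (_ : _ <= sum_f_R0 (fun k => / INR (Factorial.fact k) * B ^ k * t ^ 2) N) _.
  apply: sum_Rle => -[|[|k]] _; try by rewrite Rabs_R0; apply: Rmult_le_pos => //; apply: pow_le; lra.
  apply: Rle_trans (dom _) _; rewrite Rmult_comm; apply: Rmult_le_compat_l => //.
  by apply: pow_le_sq; lia || lra.
rewrite -scal_sum [X in _ <= X]Rmult_comm; apply: Rmult_le_compat_l; first by apply: pow_le; lra.
by apply: sum_incr => //; exact: exp_cv.
Qed.

End RealSeries.

Lemma mul_entry_bound m p q (A : 'M[R]_(m, p)) (B : 'M[R]_(p, q)) a b :
  (forall i j, Rle (Rabs (A i j)) a) -> (forall i j, Rle (Rabs (B i j)) b) ->
  forall i j, Rle (Rabs ((A *m B) i j)) (Rmult (INR p) (Rmult a b)).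
Proof.
move=> Aa Bb i j; rewrite mxE.
apply: Rle_trans (Rabs_sum_le (G := fun _ => Rmult a b) _) _.
  move=> l; rewrite mulE Rabs_mult.
  by apply: Rmult_le_compat; try exact: Rabs_pos; [exact: Aa | exact: Bb].
by rewrite sumr_const card_ord natmulE; apply: Rle_refl.
Qed.

Lemma expr_entry_bound m (X : 'M[R]_m) b : Rle 0 b -> (forall i j, Rle (Rabs (X i j)) b) ->
  forall k i j, Rle (Rabs ((X ^+ k) i j)) (pow (Rmult (INR m) b) k).
Proof.
move=> b0 Xb; elim=> [|k IH] i j.
  rewrite expr0 mxE /=; case: (i == j) => /=.
    by rewrite Rabs_R1; apply: Rle_refl.
  by rewrite Rabs_R0; apply: Rle_0_1.
rewrite exprS -mulmxE; apply: Rle_trans (mul_entry_bound Xb IH i j) _.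
by apply: Req_le; rewrite /=; ring.
Qed.

Lemma exp_first_order m (X : 'M[R]_m) : exists K : R,
  forall t : R, Rlt 0 t -> Rle t 1 -> exists E : 'M[R]_m, mx_exp_is (t *: X) E /\
    forall i j, Rle (Rabs (fun_of_matrix (E - 1%:M - t *: X) i j)) (Rmult K (pow t 2)).
Proof.
have [b [b0 Xb]] := finite_bound (fun p : 'I_m * 'I_m => Rabs (X p.1 p.2)).
set B := Rmult (INR m) b.
have B0 : Rle 0 B by apply: Rmult_le_pos => //; apply: pos_INR.
exists (exp B) => t t0 t1.
pose a i j k := Rdiv (mxpow (t *: X) k i j) (INR k`!).
have inv_fact0 k : Rlt 0 (Rinv (INR (Factorial.fact k))).
  by apply: Rinv_0_lt_compat; apply: INR_fact_lt_0.
have a_bound i j k : Rle (Rabs (a i j k))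
    (Rmult (pow t k) (Rmult (Rinv (INR (Factorial.fact k))) (pow B k))).
  have Xk := expr_entry_bound b0 (fun i j => Xb (i, j)) k i j.
  have tk : Rle 0 (pow t k) by apply: pow_le; lra.
  rewrite /a mxpowE exprZ_mx mxE factE /Rdiv Rabs_mult mulE Rabs_mult powE.
  have fact0 := inv_fact0 k.
  rewrite (Rabs_right (pow t k)) ?(Rabs_right (Rinv _)); try lra.
  rewrite Rmult_assoc; apply: Rmult_le_compat_l => //.
  by rewrite Rmult_comm; apply: Rmult_le_compat_l; [lra | exact: Xk].
have a_dom i j k : Rle (Rabs (a i j k)) (Rmult (Rinv (INR (Factorial.fact k))) (pow B k)).
  apply: Rle_trans (a_bound i j k) _.
  have [_ tk1] := pow_unit_interval k (conj (Rlt_le _ _ t0) t1).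
  rewrite -[X in Rle _ X]Rmult_1_l; apply: Rmult_le_compat_r => //.
  by apply: Rmult_le_pos; [apply: Rlt_le | apply: pow_le].
exists (\matrix_(i, j) proj1_sig (exp_dominated_cv (a_dom i j))); split.
  by move=> i j; rewrite mxE; case: (exp_dominated_cv (a_dom i j)).
move=> i j; rewrite !mxE; case: (exp_dominated_cv (a_dom i j)) => l lim /=.
have := lim_le lim (exp_tail_bound (conj t0 t1) B0 (a_bound i j)).
have -> : a i j 0%N = (1%:M : 'M[R]_m) i j by rewrite /a /= /Rdiv Rinv_1 Rmult_1_r.
have -> : a i j 1%N = Rmult t (X i j) by rewrite /a /= mulmx1 mxE /Rdiv Rinv_1 Rmult_1_r.
by rewrite mxE -addrA -opprD.
Qed.

Lemma mx_first_order_zero p q (Z : 'M[R]_(p, q)) (K : R) :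
  (forall t, Rlt 0 t -> Rle t 1 -> forall i j, Rle (Rabs ((t *: Z) i j)) (Rmult K (pow t 2))) ->
  Z = 0.
Proof.
move=> small; apply/matrixP => i j; rewrite mxE.
apply: (first_order_zero (K := K)) => t [t0 t1].
by have := small t t0 t1 i j; rewrite mxE.
Qed.

(* Elements of the Lie algebra of the centraliser have zero last row:
   differentiate at t = 0 the condition that exp(tX) lies in Aff(n). *)
Lemma lie_centraliser_last_row n (G : 'M[R]_(n + 1) -> Prop) X :
  lie_algebra (centraliser_Aff G) X -> dsubmx X = 0.
Proof.
move=> lieX; have [K expX] := exp_first_order X.
apply: (mx_first_order_zero (K := K)) => t t0 t1 i j.
have [E [expE Rsmall]] := expX t t0 t1.
have [AffE _] := lieX t E expE.
set Rm := E - 1%:M - t *: X.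
have -> : t *: dsubmx X = - dsubmx Rm.
  by rewrite /Rm linearB /= Aff_last_row // sub0r opprK linearZ.
have -> : (- dsubmx Rm) i j = - Rm (rshift n i) j by rewrite !mxE.
by rewrite Rabs_Ropp; apply: Rsmall.
Qed.

(* Elements of the Lie algebra of the centraliser commute with G: if exp(tX)
   commutes with A then t (AX - XA) is a commutator of A with the O(t^2)
   remainder exp(tX) - 1 - tX. *)
Lemma lie_centraliser_commutant n (G : 'M[R]_(n + 1) -> Prop) X :
  lie_algebra (centraliser_Aff G) X -> commutant G X.
Proof.
move=> lieX A GA; have [K expX] := exp_first_order X.
apply/eqP; rewrite -subr_eq0; apply/eqP.
have [a [a0 Aa]] := finite_bound (fun p : 'I_(n + 1) * 'I_(n + 1) => Rabs (A p.1 p.2)).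
pose c := Rmult (INR (n + 1)) (Rmult K a).
apply: (mx_first_order_zero (K := Rplus c c)) => t t0 t1 i j.
have [E [expE Rsmall]] := expX t t0 t1.
have [_ cE] := lieX t E expE.
set Rm := E - 1%:M - t *: X.
have -> : t *: (A *m X - X *m A) = Rm *m A - A *m Rm.
  rewrite /Rm !mulmxBr !mulmxBl (cE A GA) mulmx1 mul1mx -!scalemxAl -!scalemxAr scalerBr.
  by rewrite opprB [RHS]addrC [RHS]addrA subrK.
have -> : (Rm *m A - A *m Rm) i j = Rplus ((Rm *m A) i j) (Ropp ((A *m Rm) i j)).
  by rewrite [LHS]mxE; congr (_ + _); rewrite mxE.
apply: Rle_trans (Rabs_triang _ _) _; rewrite Rabs_Ropp.
have RmA := mul_entry_bound Rsmall (fun i j => Aa (i, j)) i j.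
have ARm := mul_entry_bound (fun i j => Aa (i, j)) Rsmall i j.
move: RmA ARm; rewrite -/Rm /c => RmA ARm; lra.
Qed.

(* Dimension bound: by rigidity X |-> (first n coordinates of X (0;1)) is
   injective on the Lie algebra, so independent families have at most n members. *)
Lemma lie_dim_centraliser n (G : 'M[R]_(n + 1) -> Prop) :
  transitive_on_Rn G -> lie_dim_le (centraliser_Aff G) n.
Proof.
move=> transG k X lieX indep.
pose phi (Y : 'M[R]_(n + 1)) : 'rV[R]_n := (usubmx (Y *m Defs.hom 0))^T.
pose V : 'M[R]_(k, n) := \matrix_(i, j) phi (X i) 0 j.
have rowV i : row i V = phi (X i) by apply/rowP => j; rewrite !mxE.
suff : row_free V by move/eqP <-; exact: rank_leq_col.
rewrite -kermx_eq0; apply/eqP/row_matrixP => r; rewrite row0.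
set u := row r (kermx V).
have uV : u *m V = 0 by rewrite /u -row_mul mulmx_ker row0.
pose Y := \sum_(i < k) u 0 i *: X i.
suff Y0 : Y = 0 by apply/rowP => i; rewrite [RHS]mxE; exact: (indep _ Y0 i).
apply: (commutant_point_kernel (x0 := 0) transG).
  move=> A GA; rewrite /Y mulmx_sumr mulmx_suml; apply: eq_bigr => i _.
  by rewrite -scalemxAr -scalemxAl (lie_centraliser_commutant (lieX i) GA).
have lastY : dsubmx Y = 0.
  by rewrite /Y linear_sum /=; apply: big1 => i _; rewrite linearZ /= (lie_centraliser_last_row (lieX i)) scaler0.
have phiY : phi Y = 0.
  rewrite -uV mulmx_sum_row /Y /phi mulmx_suml !linear_sum /=; apply: eq_bigr => i _.
  by rewrite rowV /phi -scalemxAl !linearZ.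
rewrite -[Y *m _]vsubmxK dsubmx_mul lastY mul0mx.
have -> : usubmx (Y *m Defs.hom 0) = 0 by rewrite -[LHS]trmxK -/(phi Y) phiY trmx0.
by rewrite col_mx0.
Qed.

Theorem mainTheorem19 (n : nat) (G : 'M[R]_(n + 1) -> Prop) :
  is_subgroup_Aff G -> transitive_on_Rn G ->
  [/\ mx_connected (centraliser_Aff G),
      (forall M, centraliser_Aff G M -> unipotent_mx M) &
      lie_dim_le (centraliser_Aff G) n].
Proof.
move=> _ transG; split.
- apply: (star_shaped_connected (O := 1%:M)).
    split; last by move=> A _; rewrite mulmx1 mul1mx.
    by exists 1%:M, 0; split; [exact: unitmx1 | exact: (scalar_mx_block n 1 1)].
  by move=> M CM s _ _; exact: centraliser_segment.
- move=> M CM; have [j Nj0] := centraliser_nilpotent transG CM.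
  by exists j; rewrite mxpowE.
- exact: lie_dim_centraliser.
Qed.
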